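(* Every closed admissible conic class contains a minimal (with respect to inclusion) closed admissible conic class.
   Context: Standing setting: $(X,\|\cdot\|)$ is a separable infinite-dimensional Banach space and $d$ is a translation-invariant stable pseudometric on $X$ such that $\mathrm{Id}\colon(X,\|\cdot\|)\to(X,d)$ is a coarse equivalence, with $\omega_{\mathrm{Id}}(t)=\sup\{d(x,y):\|x-y\|\le t\}$. $\Delta$ is a countable $\|\cdot\|$-dense $\mathbb Q$-linear subspace; $\bar x(\lambda,y)=d(\lambda x,y)$; $\mathcal T$ is the pointwise closure of $\{\bar x:x\in\Delta\}$ in $\mathbb R^{\mathbb Q\times\Delta}$; defining sequences $(x_n)\subseteq\Delta$ satisfy $\bar x_n\to\sigma$. Dilation $\alpha\cdot\sigma=\lim_n\overline{\alpha x_n}$ ($\alpha\in\mathbb Q$); convolution $\sigma*\tau=\lim_n\lim_m\overline{x_n+y_m}$. Symmetric types: $\sigma=(-1)\cdot\sigma$; $\mathcal S$ their set. $\gamma=\inf_{t>0}\omega_{\mathrm{Id}}(t)$; $\sigma$ admissible if $\sigma(1,0)>\gamma$. A conic class is a nonempty $\mathcal C\subseteq\mathcal S$, $\mathcal C\ne\{\bar0\}$, closed under dilation by all $\lambda\in\mathbb Q$ and under convolution; admissible if it contains an admissible type; closed means closed in $\mathcal T$. *)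

From Stdlib Require Import Reals QArith Qreals List.
Open Scope R_scope.

Record NormedSpace := {
  car :> Type;
  vzero : car;
  vadd : car -> car -> car;
  vopp : car -> car;
  vscal : R -> car -> car;
  vnorm : car -> R;
  vadd_assoc : forall x y z, vadd x (vadd y z) = vadd (vadd x y) z;
  vadd_comm : forall x y, vadd x y = vadd y x;
  vadd_0 : forall x, vadd x vzero = x;
  vadd_opp : forall x, vadd x (vopp x) = vzero;
  vscal_1 : forall x, vscal 1 x = x;
  vscal_assoc : forall a b x, vscal a (vscal b x) = vscal (a * b) x;
  vscal_distr_l : forall a x y, vscal a (vadd x y) = vadd (vscal a x) (vscal a y);
  vscal_distr_r : forall a b x, vscal (a + b) x = vadd (vscal a x) (vscal b x);
  vnorm_eq0 : forall x, vnorm x = 0 -> x = vzero;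
  vnorm_scal : forall a x, vnorm (vscal a x) = Rabs a * vnorm x;
  vnorm_triangle : forall x y, vnorm (vadd x y) <= vnorm x + vnorm y
}.

Arguments vzero {_}.
Arguments vadd {_}.
Arguments vopp {_}.
Arguments vscal {_}.
Arguments vnorm {_}.

Definition vsub {V : NormedSpace} (x y : V) : V := vadd x (vopp y).

Definition complete (V : NormedSpace) : Prop :=
  forall u : nat -> V,
    (forall eps, 0 < eps -> exists N, forall n m, (N <= n)%nat -> (N <= m)%nat ->
        vnorm (vsub (u n) (u m)) < eps) ->
    exists l : V, forall eps, 0 < eps -> exists N, forall n, (N <= n)%nat ->
        vnorm (vsub (u n) l) < eps.

Definition separable (V : NormedSpace) : Prop :=
  exists e : nat -> V, forall (x : V) eps, 0 < eps -> exists n, vnorm (vsub x (e n)) < eps.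

Fixpoint lin_comb {V : NormedSpace} (cs : list R) (vs : list V) : V :=
  match cs, vs with
  | c :: cs', v :: vs' => vadd (vscal c v) (lin_comb cs' vs')
  | _, _ => vzero
  end.

Definition infinite_dimensional (V : NormedSpace) : Prop :=
  ~ exists vs : list V, forall x : V,
      exists cs : list R, length cs = length vs /\ x = lin_comb cs vs.

Definition separable_inf_dim_Banach (V : NormedSpace) : Prop :=
  complete V /\ separable V /\ infinite_dimensional V.

Section Setting.
Variable V : NormedSpace.

Definition pseudometric (d : V -> V -> R) : Prop :=
  (forall x, d x x = 0) /\ (forall x y, d x y = d y x) /\
  (forall x y z, d x z <= d x y + d y z).

Definition translation_invariant (d : V -> V -> R) : Prop :=
  forall x y z, d (vadd x z) (vadd y z) = d x y.

Definition iter_lim (F : nat -> nat -> R) (a : R) : Prop :=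
  exists f : nat -> R, (forall n, Un_cv (F n) (f n)) /\ Un_cv f a.

Definition stable (d : V -> V -> R) : Prop :=
  forall (u v : nat -> V),
    (exists M, forall n, d (u n) vzero <= M /\ d (v n) vzero <= M) ->
    forall a b,
      iter_lim (fun n m => d (u n) (v m)) a ->
      iter_lim (fun m n => d (u n) (v m)) b ->
      a = b.

Definition id_coarse_equivalence (d : V -> V -> R) : Prop :=
  (forall t, exists M, forall x y : V, vnorm (vsub x y) <= t -> d x y <= M) /\
  (forall M, exists t, forall x y : V, d x y <= M -> vnorm (vsub x y) <= t).

(* omega_Id(t) < a, where omega_Id(t) = sup { d x y : ||x - y|| <= t } *)
Definition omega_lt (d : V -> V -> R) (t a : R) : Prop :=
  exists c, c < a /\ forall x y : V, vnorm (vsub x y) <= t -> d x y <= c.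

(* gamma < a, where gamma = inf_{t > 0} omega_Id(t) *)
Definition gamma_lt (d : V -> V -> R) (a : R) : Prop :=
  exists t, 0 < t /\ omega_lt d t a.

Definition good_Delta (D : V -> Prop) : Prop :=
  (exists f : nat -> V, forall x, D x -> exists n, f n = x) /\
  (forall (x : V) eps, 0 < eps -> exists y, D y /\ vnorm (vsub x y) < eps) /\
  D vzero /\
  (forall x y, D x -> D y -> D (vadd x y)) /\
  (forall (q : Q) x, D x -> D (vscal (Q2R q) x)).

Variable d : V -> V -> R.
Variable D : V -> Prop.

Definition DeltaT : Type := { y : V | D y }.

Definition Tp : Type := Q -> DeltaT -> R.

Definition bar (x : V) : Tp := fun l y => d (vscal (Q2R l) x) (proj1_sig y).

Definition conv_pt (s : nat -> Tp) (sigma : Tp) : Prop :=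
  forall l y, Un_cv (fun n => s n l y) (sigma l y).

(* membership in the pointwise (product-topology) closure of a set A of Tp *)
Definition in_closure (A : Tp -> Prop) (sigma : Tp) : Prop :=
  forall (F : list (Q * DeltaT)) eps, 0 < eps ->
    exists tau, A tau /\
      forall p, In p F -> Rabs (tau (fst p) (snd p) - sigma (fst p) (snd p)) < eps.

Definition InT (sigma : Tp) : Prop :=
  in_closure (fun tau => exists x, D x /\ tau = bar x) sigma.

Definition defining_seq (xs : nat -> V) (sigma : Tp) : Prop :=
  (forall n, D (xs n)) /\ conv_pt (fun n => bar (xs n)) sigma.

Definition is_dilation (alpha : Q) (sigma rho : Tp) : Prop :=
  exists xs, defining_seq xs sigma /\
    conv_pt (fun n => bar (vscal (Q2R alpha) (xs n))) rho.

Definition is_convolution (sigma tau rho : Tp) : Prop :=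
  exists xs ys, defining_seq xs sigma /\ defining_seq ys tau /\
    forall l y, iter_lim (fun n m => bar (vadd (xs n) (ys m)) l y) (rho l y).

Definition symmetric_type (sigma : Tp) : Prop := is_dilation (-1)%Q sigma sigma.

Definition InS (sigma : Tp) : Prop := InT sigma /\ symmetric_type sigma.

Definition admissible_type (sigma : Tp) : Prop :=
  exists z : DeltaT, proj1_sig z = vzero /\ gamma_lt d (sigma 1%Q z).

Definition subclass (A B : Tp -> Prop) : Prop := forall sigma, A sigma -> B sigma.

Definition conic_class (C : Tp -> Prop) : Prop :=
  subclass C InS /\
  (exists sigma, C sigma) /\
  ~ (forall sigma, C sigma <-> sigma = bar vzero) /\
  (forall sigma (l : Q) rho, C sigma -> is_dilation l sigma rho -> C rho) /\
  (forall sigma tau rho, C sigma -> C tau -> is_convolution sigma tau rho -> C rho).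

Definition admissible_class (C : Tp -> Prop) : Prop :=
  exists sigma, C sigma /\ admissible_type sigma.

(* closed in T (T is itself closed in R^(Q x Delta)) *)
Definition closed_class (C : Tp -> Prop) : Prop :=
  forall sigma, InT sigma -> in_closure C sigma -> C sigma.

Definition closed_admissible_conic (C : Tp -> Prop) : Prop :=
  conic_class C /\ admissible_class C /\ closed_class C.

End Setting.

From Stdlib Require Import Reals ZArith QArith Qreals List Lra Lia Cantor Classical ClassicalEpsilon ProofIrrelevance.
Open Scope R_scope.

(* Enumerate the countably many basic open boxes of R^(Q x Delta) with rational data and refine C
   along them: at each stage pass to a closed admissible conic subclass missing the current box
   whenever one exists.  The intersection M of this chain is minimal: if a closed admissible
   conic E inside M missed a point of M, some box around that point misses E, and at the stage
   of that box E showed the box could be removed.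

   The crux is that the intersection of a decreasing chain of closed admissible conic classes is
   still admissible.  Dilating by rationals, every admissible class contains a type sigma with
   sigma(1,0) in a fixed window [A, A + M] above gamma; such types are pointwise bounded, so a
   diagonal subsequence converges pointwise, and by closedness the limit lies in every class with
   value at least A > gamma at (1,0). *)

Definition eventually (P : nat -> Prop) : Prop := exists N, forall n, (N <= n)%nat -> P n.

Lemma eventually_and (P Q : nat -> Prop) :
  eventually P -> eventually Q -> eventually (fun n => P n /\ Q n).
Proof.
  intros [N1 H1] [N2 H2]. exists (N1 + N2)%nat. intros n Hn. split; [apply H1 | apply H2]; lia.
Qed.

Lemma eventually_exists (P : nat -> Prop) : eventually P -> exists n, P n.
Proof. intros [N HN]. exists N. apply HN, le_n. Qed.

Lemma Un_cv_ext (u v : nat -> R) l : (forall n, u n = v n) -> Un_cv u l -> Un_cv v l.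
Proof. intros H Hu e He. destruct (Hu e He) as [N HN]. exists N. intros n Hn. rewrite <- H. auto. Qed.

Lemma Un_cv_const c : Un_cv (fun _ => c) c.
Proof. intros e He. exists 0%nat. intros. unfold R_dist. rewrite Rminus_diag, Rabs_R0. lra. Qed.

Lemma Un_cv_eventually_gt (u : nat -> R) a c : Un_cv u a -> c < a -> eventually (fun n => c < u n).
Proof.
  intros H Hc. destruct (H (a - c)) as [N HN]; [lra|]. exists N. intros n Hn.
  specialize (HN n Hn). unfold R_dist in HN. apply Rabs_def2 in HN. lra.
Qed.

Lemma Un_cv_eventually_lt (u : nat -> R) a c : Un_cv u a -> a < c -> eventually (fun n => u n < c).
Proof.
  intros H Hc. destruct (H (c - a)) as [N HN]; [lra|]. exists N. intros n Hn.
  specialize (HN n Hn). unfold R_dist in HN. apply Rabs_def2 in HN. lra.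
Qed.

Lemma Un_cv_le (u v : nat -> R) a b :
  Un_cv u a -> Un_cv v b -> eventually (fun n => u n <= v n) -> a <= b.
Proof.
  intros Hu Hv Huv. destruct (Rle_or_lt a b) as [|Hab]; [assumption | exfalso].
  destruct (eventually_exists _ (eventually_and _ _ Huv (eventually_and _ _
    (Un_cv_eventually_gt u a ((a + b) / 2) Hu ltac:(lra))
    (Un_cv_eventually_lt v b ((a + b) / 2) Hv ltac:(lra))))) as [n Hn].
  lra.
Qed.

Lemma Un_cv_le_const (u : nat -> R) a c : Un_cv u a -> eventually (fun n => u n <= c) -> a <= c.
Proof. intros Hu Hc. exact (Un_cv_le _ _ _ _ Hu (Un_cv_const c) Hc). Qed.

Lemma Un_cv_ge_const (u : nat -> R) a c : Un_cv u a -> eventually (fun n => c <= u n) -> c <= a.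
Proof. intros Hu Hc. exact (Un_cv_le _ _ _ _ (Un_cv_const c) Hu Hc). Qed.

Lemma inv_succ_eventually_lt e : 0 < e -> eventually (fun n => / (INR n + 1) < e).
Proof.
  intros He. destruct (archimed_cor1 e He) as [N [HN HN0]]. exists N. intros n Hn.
  apply Rle_lt_trans with (/ INR N); [|assumption].
  apply Rinv_le_contravar; [apply lt_0_INR; lia|]. apply le_INR in Hn. lra.
Qed.

Lemma nat_gt r : exists N : nat, r < INR N.
Proof.
  destruct (archimed r) as [H1 _]. destruct (Z.lt_ge_cases (up r) 0) as [Hn|Hp].
  - exists O. apply IZR_lt in Hn. simpl. lra.
  - exists (Z.to_nat (up r)). rewrite INR_IZR_INZ, Z2Nat.id by lia. lra.
Qed.

Definition strictly_increasing (phi : nat -> nat) : Prop := forall n, (phi n < phi (S n))%nat.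

Lemma strictly_increasing_ge phi : strictly_increasing phi -> forall n, (n <= phi n)%nat.
Proof. intros H n. induction n; [lia|]. specialize (H n). lia. Qed.

Lemma strictly_increasing_mono phi :
  strictly_increasing phi -> forall n m, (n <= m)%nat -> (phi n <= phi m)%nat.
Proof. intros H n m Hnm. induction Hnm; [lia|]. specialize (H m). lia. Qed.

Fixpoint iter_pick (pick : nat -> nat -> nat) (k : nat) : nat :=
  match k with O => pick O O | S k' => pick (S (iter_pick pick k')) (S k') end.

Lemma Bolzano_Weierstrass_subseq (u : nat -> R) K : (forall n, Rabs (u n) <= K) ->
  exists phi l, strictly_increasing phi /\ Un_cv (fun n => u (phi n)) l.
Proof.
  intros HK.
  destruct (Bolzano_Weierstrass u (fun c => -K <= c <= K) (compact_P3 (-K) K)) as [l Hl].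
  { intros n. specialize (HK n). pose proof (Rle_abs (u n)). pose proof (Rle_abs (- u n)); rewrite Rabs_Ropp in *. lra. }
  assert (Hclose : forall N k, exists p, (N <= p)%nat /\ Rabs (u p - l) < / (INR k + 1)).
  { intros N k. assert (Hpos : 0 < / (INR k + 1)).
    { apply Rinv_0_lt_compat. pose proof (pos_INR k). lra. }
    destruct (Hl (disc l (mkposreal _ Hpos)) N) as [p Hp].
    - exists (mkposreal _ Hpos). intros x Hx. exact Hx.
    - exists p. exact Hp. }
  set (pick := fun N k => proj1_sig (constructive_indefinite_description _ (Hclose N k))).
  assert (Hpick : forall N k, (N <= pick N k)%nat /\ Rabs (u (pick N k) - l) < / (INR k + 1)).
  { intros. unfold pick. destruct (constructive_indefinite_description _ _). assumption. }
  exists (iter_pick pick), l. split.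
  - intros n. simpl. destruct (Hpick (S (iter_pick pick n)) (S n)). lia.
  - intros e He. destruct (inv_succ_eventually_lt e He) as [N HN]. exists N. intros n Hn.
    unfold R_dist. apply Rlt_trans with (/ (INR n + 1)); [|auto].
    destruct n; simpl; apply Hpick.
Qed.

Section DiagonalExtraction.
Variable I : Type.
Variable enum : nat -> I.
Hypothesis enum_surj : forall i, exists n, enum n = i.
Variable u : nat -> I -> R.
Hypothesis u_bounded : forall i, exists K, forall k, Rabs (u k i) <= K.

Lemma subseq_cv_ex (phi : nat -> nat) (i : I) :
  exists psi, strictly_increasing psi /\ exists l, Un_cv (fun n => u (phi (psi n)) i) l.
Proof.
  destruct (u_bounded i) as [K HK].
  destruct (Bolzano_Weierstrass_subseq (fun n => u (phi n) i) K) as [psi [l [Hpsi Hl]]].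
  - intros n. apply HK.
  - exists psi. split; [assumption | exists l; exact Hl].
Qed.

Definition subseq_cv (phi : nat -> nat) (i : I) : nat -> nat :=
  proj1_sig (constructive_indefinite_description _ (subseq_cv_ex phi i)).

Lemma subseq_cv_spec phi i : strictly_increasing (subseq_cv phi i) /\
  exists l, Un_cv (fun n => u (phi (subseq_cv phi i n)) i) l.
Proof. unfold subseq_cv. destruct (constructive_indefinite_description _ _). assumption. Qed.

(* [extraction j] makes [u _ (enum i)] converge for every [i < j]. *)
Fixpoint extraction (j : nat) : nat -> nat :=
  match j with
  | O => fun n => n
  | S j' => fun n => extraction j' (subseq_cv (extraction j') (enum j') n)
  end.

Lemma extraction_increasing j : strictly_increasing (extraction j).
Proof.
  induction j as [|j IH]; intros n; simpl; [lia|].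
  pose proof (proj1 (subseq_cv_spec (extraction j) (enum j)) n) as Hpsi.
  set (psi := subseq_cv (extraction j) (enum j)) in *.
  pose proof (strictly_increasing_mono _ IH _ _ Hpsi). specialize (IH (psi n)). lia.
Qed.

Lemma extraction_refines j m : (j <= m)%nat ->
  exists g, (forall n, (n <= g n)%nat) /\ forall n, extraction m n = extraction j (g n).
Proof.
  induction 1 as [|m _ [g [Hg1 Hg2]]].
  - exists (fun n => n). split; intros; [lia | reflexivity].
  - set (psi := subseq_cv (extraction m) (enum m)).
    exists (fun n => g (psi n)). split.
    + intros n. pose proof (strictly_increasing_ge psi (proj1 (subseq_cv_spec _ _)) n).
      specialize (Hg1 (psi n)). lia.
    + intros n. apply Hg2.
Qed.

Lemma diagonal_extraction : exists (delta : nat -> nat) (lim : I -> R),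
  (forall n, (n <= delta n)%nat) /\ forall i, Un_cv (fun n => u (delta n) i) (lim i).
Proof.
  assert (Hcv : forall i, exists l, Un_cv (fun n => u (extraction n n) i) l).
  { intros i. destruct (enum_surj i) as [j <-].
    destruct (proj2 (subseq_cv_spec (extraction j) (enum j))) as [l Hl].
    exists l. intros e He. destruct (Hl e He) as [N HN]. exists (N + S j)%nat. intros n Hn.
    destruct (extraction_refines (S j) n ltac:(lia)) as [g [Hg1 Hg2]].
    rewrite Hg2. apply HN. specialize (Hg1 n). lia. }
  exists (fun n => extraction n n), (fun i => proj1_sig (constructive_indefinite_description _ (Hcv i))).
  split.
  - intros n. apply strictly_increasing_ge, extraction_increasing.
  - intros i. destruct (constructive_indefinite_description _ _). assumption.
Qed.
End DiagonalExtraction.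

Lemma discrete_intermediate_value (s : nat -> R) A M J : s O < A -> A <= s J ->
  (forall j, s (S j) <= s j + M) -> exists j, A <= s j <= A + M.
Proof.
  intros H0 HJ Hs. induction J as [|J IH]; [lra|].
  destruct (Rle_or_lt A (s J)) as [H|H]; [auto|].
  exists (S J). specialize (Hs J). lra.
Qed.

Definition countable (X : Type) : Prop := exists e : nat -> X, forall x, exists n, e n = x.

Lemma countable_prod X Y : countable X -> countable Y -> countable (X * Y).
Proof.
  intros [e1 H1] [e2 H2].
  exists (fun n => (e1 (fst (Cantor.of_nat n)), e2 (snd (Cantor.of_nat n)))).
  intros [x y]. destruct (H1 x) as [a <-]. destruct (H2 y) as [b <-].
  exists (Cantor.to_nat (a, b)). rewrite Cantor.cancel_of_to. reflexivity.
Qed.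

Fixpoint decode_list {X} (e : nat -> X) (len c : nat) : list X :=
  match len with
  | O => nil
  | S len' => e (fst (Cantor.of_nat c)) :: decode_list e len' (snd (Cantor.of_nat c))
  end.

Lemma countable_list X : countable X -> countable (list X).
Proof.
  intros [e H].
  assert (Hdec : forall l : list X, exists c, decode_list e (length l) c = l).
  { induction l as [|x l [c Hc]]; [exists O; reflexivity|].
    destruct (H x) as [a <-]. exists (Cantor.to_nat (a, c)).
    cbn [decode_list length]. rewrite Cantor.cancel_of_to. cbn [fst snd]. rewrite Hc. reflexivity. }
  exists (fun n => decode_list e (fst (Cantor.of_nat n)) (snd (Cantor.of_nat n))).
  intros l. destruct (Hdec l) as [c Hc]. exists (Cantor.to_nat (length l, c)).
  rewrite Cantor.cancel_of_to. exact Hc.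
Qed.

Lemma countable_Q : countable Q.
Proof.
  exists (fun n => let p := Cantor.of_nat n in let p2 := Cantor.of_nat (snd p) in
     Qmake (Z.of_nat (fst p2) - Z.of_nat (snd p2))%Z (Pos.of_succ_nat (fst p))).
  intros [z q].
  exists (Cantor.to_nat (pred (Pos.to_nat q), Cantor.to_nat (Z.to_nat z, Z.to_nat (- z)))).
  cbv beta zeta. rewrite Cantor.cancel_of_to. cbn [fst snd].
  rewrite Cantor.cancel_of_to. cbn [fst snd]. f_equal.
  - lia.
  - apply SuccNat2Pos.inv. lia.
Qed.

Lemma Q2R_one : Q2R 1 = 1.
Proof. unfold Q2R. simpl. field. Qed.

Lemma Q2R_succ_denom (z : Z) (N : nat) :
  Q2R (Qmake z (Pos.of_succ_nat N)) = IZR z / (INR N + 1).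
Proof. unfold Q2R. simpl. rewrite <- S_INR, INR_IZR_INZ. reflexivity. Qed.

Lemma Q_dense_R x eta : 0 < eta -> exists q, Rabs (Q2R q - x) < eta.
Proof.
  intros He. destruct (eventually_exists _ (inv_succ_eventually_lt eta He)) as [N HN].
  assert (HNp : 0 < INR N + 1) by (pose proof (pos_INR N); lra).
  exists (Qmake (up (x * (INR N + 1))) (Pos.of_succ_nat N)). rewrite Q2R_succ_denom.
  destruct (archimed (x * (INR N + 1))) as [H1 H2].
  assert (Hq : IZR (up (x * (INR N + 1))) / (INR N + 1) - x
               = (IZR (up (x * (INR N + 1))) - x * (INR N + 1)) * / (INR N + 1))
    by (field; lra).
  rewrite Hq, Rabs_right.
  - apply Rle_lt_trans with (1 * / (INR N + 1)); [|lra].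
    apply Rmult_le_compat_r; [left; apply Rinv_0_lt_compat|]; lra.
  - apply Rle_ge, Rmult_le_pos; [lra | left; apply Rinv_0_lt_compat; lra].
Qed.

Section VectorFacts.
Variable V : NormedSpace.

Lemma vscal_0_l (x : V) : vscal 0 x = vzero.
Proof.
  assert (H : vscal 0 x = vadd (vscal 0 x) (vscal 0 x)).
  { rewrite <- vscal_distr_r. f_equal. ring. }
  transitivity (vadd (vadd (vscal 0 x) (vscal 0 x)) (vopp (vscal 0 x))).
  - rewrite <- vadd_assoc, vadd_opp, vadd_0. reflexivity.
  - rewrite <- H. apply vadd_opp.
Qed.

Lemma vscal_0_r a : vscal a (@vzero V) = vzero.
Proof. rewrite <- (vscal_0_l vzero), vscal_assoc, Rmult_0_r. reflexivity. Qed.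

Lemma vnorm_0 : vnorm (@vzero V) = 0.
Proof. rewrite <- (vscal_0_l vzero), vnorm_scal, Rabs_R0. ring. Qed.

Lemma vopp_scal (x : V) : vopp x = vscal (-1) x.
Proof.
  assert (Hsum : vadd x (vscal (-1) x) = vzero).
  { rewrite <- (vscal_1 _ x) at 1. rewrite <- vscal_distr_r, Rplus_opp_r. apply vscal_0_l. }
  rewrite <- (vadd_0 _ (vopp x)), <- Hsum, vadd_assoc, (vadd_comm _ (vopp x) x), vadd_opp,
    vadd_comm, vadd_0.
  reflexivity.
Qed.

Lemma vsub_0_r (x : V) : vsub x vzero = x.
Proof. unfold vsub. rewrite vopp_scal, vscal_0_r. apply vadd_0. Qed.

Lemma vsub_diag (x : V) : vsub x x = vzero.
Proof. apply vadd_opp. Qed.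

Lemma vsub_scal a b (x : V) : vsub (vscal a x) (vscal b x) = vscal (a - b) x.
Proof. unfold vsub. rewrite vopp_scal, vscal_assoc, <- vscal_distr_r. f_equal. ring. Qed.
End VectorFacts.

Section PointwiseTopology.
Variable V : NormedSpace.
Variable D : V -> Prop.

Lemma DeltaT_eq (a b : DeltaT V D) : proj1_sig a = proj1_sig b -> a = b.
Proof. destruct a as [a Ha], b as [b Hb]. simpl. intros <-. f_equal. apply proof_irrelevance. Qed.

Lemma countable_DeltaT : good_Delta V D -> countable (DeltaT V D).
Proof.
  intros [[f Hf] [_ [H0 _]]].
  assert (Hlift : forall n, exists y : DeltaT V D, D (f n) -> proj1_sig y = f n).
  { intros n. destruct (classic (D (f n))) as [Hd|Hd].
    - exists (exist _ (f n) Hd). auto.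
    - exists (exist _ vzero H0). tauto. }
  exists (fun n => proj1_sig (constructive_indefinite_description _ (Hlift n))).
  intros [y Hy]. destruct (Hf y Hy) as [n <-]. exists n.
  destruct (constructive_indefinite_description _ _) as [y' Hy']. simpl.
  apply DeltaT_eq. auto.
Qed.

Lemma in_closure_mono (A B : Tp V D -> Prop) sigma :
  subclass V D A B -> in_closure V D A sigma -> in_closure V D B sigma.
Proof. intros HAB H F eps He. destruct (H F eps He) as [tau [HA Ht]]. exists tau. auto. Qed.

Lemma in_closure_idem (A : Tp V D -> Prop) sigma :
  in_closure V D (in_closure V D A) sigma -> in_closure V D A sigma.
Proof.
  intros H F eps He. destruct (H F (eps / 2) ltac:(lra)) as [tau [Htau H1]].
  destruct (Htau F (eps / 2) ltac:(lra)) as [tau' [HA H2]].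
  exists tau'. split; [exact HA|]. intros p Hp. specialize (H1 p Hp). specialize (H2 p Hp).
  pose proof (R_dist_tri (tau' (fst p) (snd p)) (sigma (fst p) (snd p)) (tau (fst p) (snd p))).
  unfold R_dist in *. lra.
Qed.

Lemma conv_pt_finite (u : nat -> Tp V D) rho (F : list (Q * DeltaT V D)) eps :
  conv_pt V D u rho -> 0 < eps ->
  eventually (fun n => forall p, In p F -> Rabs (u n (fst p) (snd p) - rho (fst p) (snd p)) < eps).
Proof.
  intros Hcv He. induction F as [|p F IH].
  - exists O. intros n _ p [].
  - destruct (eventually_and _ _ IH (Hcv (fst p) (snd p) eps He)) as [N HN].
    exists N. intros n Hn q [<-|Hq]; apply HN; auto.
Qed.

Lemma conv_pt_in_closure (A : Tp V D -> Prop) (u : nat -> Tp V D) rho :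
  conv_pt V D u rho -> eventually (fun n => A (u n)) -> in_closure V D A rho.
Proof.
  intros Hcv HA F eps He.
  destruct (eventually_exists _ (eventually_and _ _ HA (conv_pt_finite u rho F eps Hcv He)))
    as [n [HAn Hn]].
  exists (u n). auto.
Qed.

(* Rational centres and radius make the basic open boxes countably many. *)
Definition code : Type := (list ((Q * DeltaT V D) * Q) * Q)%type.

Definition basic_open (c : code) (tau : Tp V D) : Prop :=
  forall p, In p (fst c) -> Rabs (tau (fst (fst p)) (snd (fst p)) - Q2R (snd p)) < Q2R (snd c).

Lemma countable_code : good_Delta V D -> countable code.
Proof.
  intros HD. apply countable_prod; [|exact countable_Q].
  apply countable_list, countable_prod; [|exact countable_Q].
  exact (countable_prod _ _ countable_Q (countable_DeltaT HD)).
Qed.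

Lemma rational_centres (sigma : Tp V D) eta F : 0 < eta ->
  exists L : list ((Q * DeltaT V D) * Q), map fst L = F /\
    forall p, In p L -> Rabs (sigma (fst (fst p)) (snd (fst p)) - Q2R (snd p)) < eta.
Proof.
  intros He. induction F as [|x F [L [HL1 HL2]]].
  - exists nil. split; [reflexivity | intros p []].
  - destruct (Q_dense_R (sigma (fst x) (snd x)) eta He) as [q Hq].
    exists ((x, q) :: L). split; [simpl; congruence|].
    intros p [<-|Hp]; [rewrite Rabs_minus_sym; exact Hq | auto].
Qed.

Lemma basic_open_separates (A : Tp V D -> Prop) sigma : ~ in_closure V D A sigma ->
  exists c, basic_open c sigma /\ forall tau, A tau -> ~ basic_open c tau.
Proof.
  intros Hncl.
  apply not_all_ex_not in Hncl as [F Hncl]. apply not_all_ex_not in Hncl as [eps Hncl].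
  apply imply_to_and in Hncl as [Heps Hncl].
  destruct (eventually_exists _ (inv_succ_eventually_lt (eps / 2) ltac:(lra))) as [n Hn].
  set (r := Qmake 1 (Pos.of_succ_nat n)).
  assert (Hr : Q2R r = / (INR n + 1)).
  { unfold r. rewrite Q2R_succ_denom. unfold Rdiv. ring. }
  assert (Hrpos : 0 < Q2R r).
  { rewrite Hr. apply Rinv_0_lt_compat. pose proof (pos_INR n). lra. }
  destruct (rational_centres sigma (Q2R r) F Hrpos) as [L [HL1 HL2]].
  exists (L, r). split; [exact HL2|].
  intros tau Htau HU. apply Hncl. exists tau. split; [exact Htau|].
  intros x Hx. rewrite <- HL1 in Hx. apply in_map_iff in Hx as [p [<- Hp]].
  specialize (HU p Hp). specialize (HL2 p Hp). simpl in HU.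
  pose proof (R_dist_tri (tau (fst (fst p)) (snd (fst p))) (sigma (fst (fst p)) (snd (fst p)))
                         (Q2R (snd p))).
  unfold R_dist in *. rewrite (Rabs_minus_sym (Q2R _)) in *. lra.
Qed.
End PointwiseTopology.

Section Types.
Variable V : NormedSpace.
Variable d : V -> V -> R.
Variable D : V -> Prop.
Hypothesis d_pseudometric : pseudometric V d.
Hypothesis d_coarse : id_coarse_equivalence V d.
Hypothesis D_good : good_Delta V D.

Lemma d_diag x : d x x = 0.
Proof. apply d_pseudometric. Qed.

Lemma d_triangle x y z : d x z <= d x y + d y z.
Proof. apply d_pseudometric. Qed.

Lemma d_nonneg x y : 0 <= d x y.
Proof.
  pose proof (d_triangle x y x). rewrite d_diag, (proj1 (proj2 d_pseudometric) y x) in H. lra.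
Qed.

Lemma gamma_lt_pos a : gamma_lt V d a -> 0 < a.
Proof.
  intros [t [Ht [c [Hc Hw]]]]. specialize (Hw vzero vzero).
  rewrite vsub_diag, vnorm_0, d_diag in Hw. specialize (Hw ltac:(lra)). lra.
Qed.

Lemma gamma_lt_le a b : gamma_lt V d a -> a <= b -> gamma_lt V d b.
Proof. intros [t [Ht [c [Hc Hw]]]] Hab. exists t. split; [|exists c; split]; auto; lra. Qed.

Section OriginDistances.
Variable xs : nat -> V.

Lemma origin_dist_large t A : 0 < t -> eventually (fun n => t < vnorm (xs n)) ->
  exists r0, forall r L, r0 <= r -> Un_cv (fun n => d (vscal r (xs n)) vzero) L -> A <= L.
Proof.
  intros Ht Hlow. destruct (proj2 d_coarse A) as [tA HtA].
  exists (Rabs tA / t + 1). intros r L Hr HL.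
  assert (Hr0 : 0 < r).
  { assert (0 <= Rabs tA / t) by (apply Rmult_le_pos; [apply Rabs_pos | left; apply Rinv_0_lt_compat; exact Ht]). lra. }
  assert (Hrt : tA < r * t).
  { apply Rle_lt_trans with (Rabs tA); [apply Rle_abs|].
    apply Rmult_le_compat_r with (r := t) in Hr; [|lra].
    replace ((Rabs tA / t + 1) * t) with (Rabs tA + t) in Hr by (field; lra). lra. }
  apply (Un_cv_ge_const _ _ _ HL). destruct Hlow as [N HN]. exists N. intros n Hn.
  destruct (Rle_or_lt (d (vscal r (xs n)) vzero) A) as [Hle|]; [exfalso|lra].
  specialize (HtA _ _ Hle). rewrite vsub_0_r, vnorm_scal, Rabs_right in HtA by lra.
  specialize (HN n Hn). assert (r * t < r * vnorm (xs n)) by (apply Rmult_lt_compat_l; lra).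
  lra.
Qed.

Lemma origin_dist_step T M r r' L L' :
  eventually (fun n => vnorm (xs n) <= T) ->
  (forall x y : V, vnorm (vsub x y) <= 1 -> d x y <= M) -> Rabs (r - r') * T <= 1 ->
  Un_cv (fun n => d (vscal r (xs n)) vzero) L -> Un_cv (fun n => d (vscal r' (xs n)) vzero) L' ->
  L <= L' + M.
Proof.
  intros [N HN] HM Hrr HL HL'.
  apply (Un_cv_le _ _ _ _ HL (CV_plus _ _ _ _ HL' (Un_cv_const M))).
  exists N. intros n Hn.
  pose proof (d_triangle (vscal r (xs n)) (vscal r' (xs n)) vzero).
  enough (d (vscal r (xs n)) (vscal r' (xs n)) <= M) by lra.
  apply HM. rewrite vsub_scal, vnorm_scal.
  apply Rle_trans with (Rabs (r - r') * T); [|exact Hrr].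
  apply Rmult_le_compat_l; [apply Rabs_pos | auto].
Qed.
End OriginDistances.

Variable z0 : DeltaT V D.
Hypothesis z0_origin : proj1_sig z0 = vzero.

Lemma admissible_origin sigma : admissible_type V d D sigma -> gamma_lt V d (sigma 1%Q z0).
Proof. intros [z [Hz Hg]]. replace z0 with z; [exact Hg|]. apply DeltaT_eq. congruence. Qed.

Lemma admissible_neq_bar0 sigma : admissible_type V d D sigma -> sigma <> bar V d D vzero.
Proof.
  intros Hadm ->. apply admissible_origin, gamma_lt_pos in Hadm.
  unfold bar in Hadm. rewrite vscal_0_r, z0_origin, d_diag in Hadm. lra.
Qed.

Section DefiningSequence.
Variable xs : nat -> V.
Variable sigma : Tp V D.
Hypothesis xs_defining : defining_seq V d D xs sigma.

Lemma defining_seq_origin q : Un_cv (fun n => d (vscal (Q2R q) (xs n)) vzero) (sigma q z0).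
Proof.
  apply Un_cv_ext with (u := fun n => bar V d D (xs n) q z0); [|apply xs_defining].
  intros n. unfold bar. rewrite z0_origin. reflexivity.
Qed.

Lemma defining_seq_origin1 : Un_cv (fun n => d (xs n) vzero) (sigma 1%Q z0).
Proof.
  apply Un_cv_ext with (u := fun n => d (vscal (Q2R 1) (xs n)) vzero).
  - intros n. rewrite Q2R_one, vscal_1. reflexivity.
  - apply defining_seq_origin.
Qed.

Lemma defining_seq_norm_bounded : exists T, eventually (fun n => vnorm (xs n) <= T).
Proof.
  destruct (proj2 d_coarse (sigma 1%Q z0 + 1)) as [T HT]. exists T.
  destruct (Un_cv_eventually_lt _ _ (sigma 1%Q z0 + 1) defining_seq_origin1 ltac:(lra))
    as [N HN].
  exists N. intros n Hn. rewrite <- (vsub_0_r _ (xs n)). apply HT. left. auto.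
Qed.

Lemma defining_seq_norm_away : admissible_type V d D sigma ->
  exists t, 0 < t /\ eventually (fun n => t < vnorm (xs n)).
Proof.
  intros Hadm. destruct (admissible_origin sigma Hadm) as [t [Ht [c [Hc Hw]]]].
  exists t. split; [exact Ht|].
  destruct (Un_cv_eventually_gt _ _ c defining_seq_origin1 Hc) as [N HN].
  exists N. intros n Hn. destruct (Rle_or_lt (vnorm (xs n)) t) as [Hle|]; [exfalso|assumption].
  rewrite <- (vsub_0_r _ (xs n)) in Hle. specialize (Hw _ _ Hle). specialize (HN n Hn). lra.
Qed.

Definition dilate (b : Q) (tau : Tp V D) : Tp V D := fun l y => tau (l * b)%Q y.

Lemma defining_seq_dilate b :
  defining_seq V d D (fun n => vscal (Q2R b) (xs n)) (dilate b sigma).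
Proof.
  split.
  - intros n. apply D_good, xs_defining.
  - intros l y. apply Un_cv_ext with (u := fun n => bar V d D (xs n) (l * b)%Q y);
      [|apply xs_defining].
    intros n. unfold bar. rewrite vscal_assoc, Q2R_mult. reflexivity.
Qed.

Lemma is_dilation_dilate b : is_dilation V d D b sigma (dilate b sigma).
Proof. exists xs. split; [exact xs_defining | apply defining_seq_dilate]. Qed.

(* Scan the dilations [j / (N + 1)], [j = 0, 1, ...]: they start at [0], eventually exceed [A],
   and a step changes the value at [z0] by at most [M] once [N + 1] bounds [|x_n|]. *)
Lemma defining_seq_normalize A M : 0 < A ->
  (forall x y : V, vnorm (vsub x y) <= 1 -> d x y <= M) -> admissible_type V d D sigma ->
  exists b, A <= dilate b sigma 1%Q z0 <= A + M.
Proof.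
  intros HA HM Hadm.
  destruct defining_seq_norm_bounded as [T HT].
  destruct (defining_seq_norm_away Hadm) as [t [Ht Hlow]].
  destruct (origin_dist_large xs t A Ht Hlow) as [r0 Hr0].
  destruct (nat_gt T) as [N HN].
  assert (HNp : 0 < INR N + 1) by (pose proof (pos_INR N); lra).
  destruct (nat_gt (r0 * (INR N + 1))) as [J HJ].
  set (beta := fun j : nat => Qmake (Z.of_nat j) (Pos.of_succ_nat N)).
  set (s := fun j => dilate (beta j) sigma 1%Q z0).
  assert (Hs : forall j, Un_cv (fun n => d (vscal (INR j / (INR N + 1)) (xs n)) vzero) (s j)).
  { intros j. replace (INR j / (INR N + 1)) with (Q2R (1 * beta j)); [apply defining_seq_origin|].
    unfold beta. rewrite Q2R_mult, Q2R_one, Q2R_succ_denom, <- INR_IZR_INZ. ring. }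
  destruct (discrete_intermediate_value s A M J) as [j Hj].
  - replace (s O) with 0; [exact HA|].
    apply (UL_sequence _ _ _ (Un_cv_const 0)). apply Un_cv_ext with (2 := Hs O).
    intros n. simpl. unfold Rdiv. rewrite Rmult_0_l, vscal_0_l, d_diag. reflexivity.
  - refine (Hr0 _ _ _ (Hs J)). apply Rmult_le_reg_r with (INR N + 1); [exact HNp|].
    unfold Rdiv. rewrite Rmult_assoc, Rinv_l by lra. lra.
  - intros j. refine (origin_dist_step xs T M _ _ _ _ HT HM _ (Hs (S j)) (Hs j)).
    replace (INR (S j) / (INR N + 1) - INR j / (INR N + 1)) with (/ (INR N + 1))
      by (rewrite S_INR; field; lra).
    rewrite Rabs_right by (left; apply Rinv_0_lt_compat; exact HNp).
    apply Rmult_le_reg_l with (INR N + 1); [exact HNp|].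
    rewrite <- Rmult_assoc, Rinv_r by lra. lra.
  - exists (beta j). exact Hj.
Qed.
End DefiningSequence.

Lemma type_coord_bounded B l y : exists K, forall rho ws,
  defining_seq V d D ws rho -> rho 1%Q z0 <= B -> Rabs (rho l y) <= K.
Proof.
  destruct (proj2 d_coarse (B + 1)) as [TB HTB].
  destruct (proj1 d_coarse (Rabs (Q2R l) * TB)) as [Ml HMl].
  exists (Ml + d vzero (proj1_sig y)). intros rho ws Hws HB.
  destruct (Un_cv_eventually_lt _ _ (B + 1) (defining_seq_origin1 _ _ Hws) ltac:(lra))
    as [N HN].
  assert (Hnonneg : 0 <= rho l y).
  { apply (Un_cv_ge_const _ _ _ (proj2 Hws l y)). exists O. intros. apply d_nonneg. }
  rewrite Rabs_right by lra.
  apply (Un_cv_le_const _ _ _ (proj2 Hws l y)). exists N. intros n Hn. unfold bar.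
  pose proof (d_triangle (vscal (Q2R l) (ws n)) vzero (proj1_sig y)).
  enough (d (vscal (Q2R l) (ws n)) vzero <= Ml) by lra.
  apply HMl. rewrite vsub_0_r, vnorm_scal. apply Rmult_le_compat_l; [apply Rabs_pos|].
  rewrite <- (vsub_0_r _ (ws n)). apply HTB. left. apply HN, Hn.
Qed.

Lemma types_cluster B (rf : nat -> Tp V D) :
  (forall k, exists ws, defining_seq V d D ws (rf k)) -> (forall k, rf k 1%Q z0 <= B) ->
  exists (delta : nat -> nat) rho,
    (forall n, (n <= delta n)%nat) /\ conv_pt V D (fun n => rf (delta n)) rho.
Proof.
  intros Hws HB.
  destruct (countable_prod _ _ countable_Q (countable_DeltaT V D D_good)) as [enum Henum].
  destruct (diagonal_extraction _ enum Henum (fun k p => rf k (fst p) (snd p)))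
    as [delta [lim [Hdelta Hlim]]].
  - intros [l y]. destruct (type_coord_bounded B l y) as [K HK]. exists K. intros k.
    destruct (Hws k) as [ws Hk]. exact (HK _ ws Hk (HB k)).
  - exists delta, (fun l y => lim (l, y)). split; [exact Hdelta|].
    intros l y. exact (Hlim (l, y)).
Qed.
End Types.

Section ConicClasses.
Variable V : NormedSpace.
Variable d : V -> V -> R.
Variable D : V -> Prop.
Hypothesis d_pseudometric : pseudometric V d.
Hypothesis d_coarse : id_coarse_equivalence V d.
Hypothesis D_good : good_Delta V D.

Notation cac := (closed_admissible_conic V d D).

Lemma decreasing_family_le {X : Type} (Cs : nat -> X -> Prop) :
  (forall k x, Cs (S k) x -> Cs k x) -> forall k m x, (k <= m)%nat -> Cs m x -> Cs k x.
Proof. intros Hdec k m x Hkm. induction Hkm; auto. Qed.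

Lemma InT_conv_pt (u : nat -> Tp V D) rho :
  conv_pt V D u rho -> eventually (fun n => InT V d D (u n)) -> InT V d D rho.
Proof. intros Hcv HT. apply in_closure_idem, (conv_pt_in_closure V D _ u rho Hcv HT). Qed.

Lemma InS_defining_seq sigma : InS V d D sigma -> exists xs, defining_seq V d D xs sigma.
Proof. intros [_ [xs [Hxs _]]]. exists xs. exact Hxs. Qed.

Lemma conic_normalized_member C z0 A M : cac C -> proj1_sig z0 = vzero -> 0 < A ->
  (forall x y : V, vnorm (vsub x y) <= 1 -> d x y <= M) ->
  exists rho, C rho /\ (exists ws, defining_seq V d D ws rho) /\ A <= rho 1%Q z0 <= A + M.
Proof.
  intros [[HS [_ [_ [Hdil _]]]] [[sigma [Hsigma Hadm]] _]] Hz0 HA HM.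
  destruct (InS_defining_seq sigma (HS sigma Hsigma)) as [xs Hxs].
  destruct (defining_seq_normalize V d D d_pseudometric d_coarse z0 Hz0 xs sigma Hxs
              A M HA HM Hadm) as [b Hb].
  exists (dilate V D b sigma). split; [|split; [|exact Hb]].
  - exact (Hdil sigma b _ Hsigma (is_dilation_dilate V d D D_good xs sigma Hxs b)).
  - eexists. exact (defining_seq_dilate V d D D_good xs sigma Hxs b).
Qed.

Lemma decreasing_chain_admissible (Cs : nat -> Tp V D -> Prop) :
  (forall k, cac (Cs k)) -> (forall k sigma, Cs (S k) sigma -> Cs k sigma) ->
  exists rho, (forall k, Cs k rho) /\ admissible_type V d D rho.
Proof.
  intros Hcac Hdec.
  destruct (Hcac O) as [_ [[sigma0 [_ [z0 [Hz0 Hgamma]]]] _]].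
  set (A := sigma0 1%Q z0) in *.
  pose proof (gamma_lt_pos V d d_pseudometric A Hgamma) as HA.
  destruct (proj1 d_coarse 1) as [M HM].
  assert (Hmember : forall k, exists rho, Cs k rho /\ (exists ws, defining_seq V d D ws rho) /\
                                          A <= rho 1%Q z0 <= A + M)
    by (intros k; exact (conic_normalized_member (Cs k) z0 A M (Hcac k) Hz0 HA HM)).
  apply choice in Hmember as [rf Hrf].
  destruct (types_cluster V d D d_pseudometric d_coarse D_good z0 Hz0 (A + M) rf)
    as [delta [rho [Hdelta Hcv]]]; [apply Hrf | apply Hrf |].
  assert (HT : InT V d D rho).
  { apply (InT_conv_pt _ rho Hcv). exists O. intros n _.
    destruct (Hcac (delta n)) as [[HS _] _]. apply HS, Hrf. }
  exists rho. split.
  - intros m. destruct (Hcac m) as [_ [_ Hclosed]]. apply (Hclosed rho HT).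
    apply (conv_pt_in_closure V D _ _ rho Hcv). exists m. intros n Hn.
    apply (decreasing_family_le Cs Hdec m (delta n)); [specialize (Hdelta n); lia | apply Hrf].
  - exists z0. split; [exact Hz0|]. apply (gamma_lt_le V d A _ Hgamma).
    apply (Un_cv_ge_const _ _ _ (Hcv 1%Q z0)). exists O. intros n _. apply Hrf.
Qed.

Lemma inter_closed_admissible_conic {I : Type} (i0 : I) (Cs : I -> Tp V D -> Prop) :
  (forall i, cac (Cs i)) -> (exists rho, (forall i, Cs i rho) /\ admissible_type V d D rho) ->
  cac (fun sigma => forall i, Cs i sigma).
Proof.
  intros Hcac [rho [Hrho Hadm]].
  split; [split; [|split; [|split; [|split]]] | split].
  - intros sigma Hsigma. destruct (Hcac i0) as [[HS _] _]. apply HS, Hsigma.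
  - exists rho. exact Hrho.
  - intros Hbar0. pose proof Hadm as [z0 [Hz0 _]].
    apply (admissible_neq_bar0 V d D d_pseudometric z0 Hz0 _ Hadm), Hbar0, Hrho.
  - intros sigma l tau Hsigma Hdil i. destruct (Hcac i) as [[_ [_ [_ [HCdil _]]]] _].
    exact (HCdil sigma l tau (Hsigma i) Hdil).
  - intros sigma tau r Hsigma Htau Hconv i. destruct (Hcac i) as [[_ [_ [_ [_ HCconv]]]] _].
    exact (HCconv sigma tau r (Hsigma i) (Htau i) Hconv).
  - exists rho. split; assumption.
  - intros sigma HT Hcl i. destruct (Hcac i) as [_ [_ Hclosed]].
    apply (Hclosed sigma HT), (in_closure_mono V D _ _ sigma (fun tau Htau => Htau i) Hcl).
Qed.
End ConicClasses.

Section MinimalClass.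
Variable V : NormedSpace.
Variable d : V -> V -> R.
Variable D : V -> Prop.
Hypothesis d_pseudometric : pseudometric V d.
Hypothesis d_coarse : id_coarse_equivalence V d.
Hypothesis D_good : good_Delta V D.

Notation cac := (closed_admissible_conic V d D).

Definition avoidable (C : Tp V D -> Prop) (c : code V D) : Prop :=
  exists E, cac E /\ subclass V D E C /\ forall tau, E tau -> ~ basic_open V D c tau.

Lemma shrink_ex (C : Tp V D -> Prop) (c : code V D) : exists E : Tp V D -> Prop,
  subclass V D E C /\ (cac C -> cac E) /\
  (avoidable C c -> forall tau, E tau -> ~ basic_open V D c tau).
Proof.
  destruct (classic (avoidable C c)) as [[E [HE [HEC Havoid]]]|Hnot].
  - exists E. auto.
  - exists C. split; [intros tau; auto | tauto].
Qed.

Definition shrink (C : Tp V D -> Prop) (c : code V D) : Tp V D -> Prop :=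
  proj1_sig (constructive_indefinite_description _ (shrink_ex C c)).

Lemma shrink_spec C c : subclass V D (shrink C c) C /\ (cac C -> cac (shrink C c)) /\
  (avoidable C c -> forall tau, shrink C c tau -> ~ basic_open V D c tau).
Proof. unfold shrink. destruct (constructive_indefinite_description _ _). assumption. Qed.

Fixpoint shrink_chain (C : Tp V D -> Prop) (enum : nat -> code V D) (k : nat) : Tp V D -> Prop :=
  match k with
  | O => C
  | S k' => shrink (shrink_chain C enum k') (enum k')
  end.

Section Chain.
Variable C : Tp V D -> Prop.
Hypothesis C_cac : cac C.
Variable enum : nat -> code V D.
Hypothesis enum_surj : forall c, exists k, enum k = c.

Definition chain_limit : Tp V D -> Prop := fun sigma => forall k, shrink_chain C enum k sigma.

Lemma shrink_chain_cac k : cac (shrink_chain C enum k).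
Proof. induction k as [|k IH]; [exact C_cac | apply (shrink_spec _ _), IH]. Qed.

Lemma shrink_chain_decreasing k sigma :
  shrink_chain C enum (S k) sigma -> shrink_chain C enum k sigma.
Proof. apply shrink_spec. Qed.

Lemma chain_limit_cac : cac chain_limit.
Proof.
  apply (inter_closed_admissible_conic V d D d_pseudometric O); [exact shrink_chain_cac|].
  apply (decreasing_chain_admissible V d D d_pseudometric d_coarse D_good);
    [exact shrink_chain_cac | exact shrink_chain_decreasing].
Qed.

Lemma chain_limit_minimal E : cac E -> subclass V D E chain_limit ->
  forall sigma, chain_limit sigma -> E sigma.
Proof.
  intros HE HEM sigma Hsigma. apply NNPP. intros HnE.
  assert (Hncl : ~ in_closure V D E sigma).
  { intros Hcl. apply HnE. destruct HE as [_ [_ Hclosed]].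
    apply (Hclosed sigma); [|exact Hcl].
    destruct C_cac as [[HS _] _]. apply HS, (Hsigma O). }
  destruct (basic_open_separates V D E sigma Hncl) as [c [Hc HEc]].
  destruct (enum_surj c) as [k <-].
  apply (proj2 (proj2 (shrink_spec (shrink_chain C enum k) (enum k)))) with sigma.
  - exists E. split; [exact HE | split; [intros tau Htau; exact (HEM tau Htau k) | exact HEc]].
  - exact (Hsigma (S k)).
  - exact Hc.
Qed.
End Chain.

Lemma minimal_closed_admissible_conic C : cac C ->
  exists M, subclass V D M C /\ cac M /\
    (forall E, cac E -> subclass V D E M -> forall sigma, E sigma <-> M sigma).
Proof.
  intros HC. destruct (countable_code V D D_good) as [enum Henum].
  exists (chain_limit C enum). split; [|split].
  - intros sigma Hsigma. exact (Hsigma O).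
  - exact (chain_limit_cac C HC enum).
  - intros E HE HEM sigma. split; [apply HEM | apply (chain_limit_minimal C HC enum Henum E HE HEM)].
Qed.
End MinimalClass.

Theorem proposition5p3 :
  forall (V : NormedSpace) (d : V -> V -> R) (D : V -> Prop),
    separable_inf_dim_Banach V ->
    pseudometric V d ->
    translation_invariant V d ->
    stable V d ->
    id_coarse_equivalence V d ->
    good_Delta V D ->
    forall C : Tp V D -> Prop,
      closed_admissible_conic V d D C ->
      exists M : Tp V D -> Prop,
        subclass V D M C /\
        closed_admissible_conic V d D M /\
        (forall E : Tp V D -> Prop,
            closed_admissible_conic V d D E -> subclass V D E M ->
            forall sigma, E sigma <-> M sigma).
Proof.
  intros V d D _ Hpm _ _ Hce HD.
  exact (minimal_closed_admissible_conic V d D Hpm Hce HD).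
Qed.
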